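(* For every normal PO-dilator $W$ and every partial order $X$, the relation $\leq_{\mathcal T W(X)}$ is a partial order on $\mathcal T W(X)$.
   Context: A quasi embedding between partial orders $X,Y$ is a function $f$ with $f(x)\leq_Y f(y)\Rightarrow x\leq_X y$; an embedding also satisfies the converse. $\mathrm{PO}$ is the category of partial orders and quasi embeddings. $[X]^{<\omega}$ denotes the finite subsets of $X$, with $[f]^{<\omega}(a)=\{f(x)\mid x\in a\}$; subsets of partial orders are regarded as suborders and $\iota_a$ denotes an inclusion map. A PO-dilator is a functor $W:\mathrm{PO}\to\mathrm{PO}$ mapping embeddings to embeddings, with a natural transformation $\operatorname{supp}^W:W\Rightarrow[\cdot]^{<\omega}$ such that for every embedding $f:X\to Y$, $\operatorname{rng}(W(f))=\{\sigma\in W(Y)\mid\operatorname{supp}^W_Y(\sigma)\subseteq\operatorname{rng}(f)\}$. For finite $a,b\subseteq X$, $a\leq^{\mathrm{fin}}_X b$ iff every $x\in a$ has some $y\in b$ with $x\leq_X y$. $W$ is normal if $\sigma\leq_{W(X)}\tau$ implies $\operatorname{supp}^W_X(\sigma)\leq^{\mathrm{fin}}_X\operatorname{supp}^W_X(\tau)$. For a normal PO-dilator $W$ and partial order $X$, the set $\mathcal T W(X)$ and relation $\leq_{\mathcal T W(X)}$ are defined by simultaneous recursion. Terms: (i) $\overline x$ for each $x\in X$; (ii) for each finite $a\subseteq\mathcal T W(X)$ on which the restriction of $\leq_{\mathcal T W(X)}$ is a partial order, and each $\sigma\in W(a)$ with $\operatorname{supp}^W_a(\sigma)=a$, a term $\circ(a,\sigma)$.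 Relation: $s\leq_{\mathcal T W(X)}t$ iff (i') $s=\overline x$, $t=\overline y$, $x\leq_X y$; or (ii') $t=\circ(b,\tau)$ and $s\leq_{\mathcal T W(X)}t'$ for some $t'\in b$; or (iii') $s=\circ(a,\sigma)$, $t=\circ(b,\tau)$, the restriction of $\leq_{\mathcal T W(X)}$ to $a\cup b$ is a partial order, and $W(\iota_a)(\sigma)\leq_{W(a\cup b)}W(\iota_b)(\tau)$ for the inclusions $\iota_a:a\hookrightarrow a\cup b$, $\iota_b:b\hookrightarrow a\cup b$. (The recursion is along the length $l(\overline x)=0$, $l(\circ(a,\sigma))=1+\sum_{r\in a}2\,l(r)$.) *)

From Stdlib Require Import List.

Set Implicit Arguments.

Definition is_po (T : Type) (r : T -> T -> Prop) : Prop :=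
  (forall x, r x x) /\
  (forall x y, r x y -> r y x -> x = y) /\
  (forall x y z, r x y -> r y z -> r x z).

Record PO := mkPO {
  car :> Type;
  le : car -> car -> Prop;
  le_po : is_po le
}.
Arguments le {p} _ _.

Definition quasi_emb (X Y : PO) (f : X -> Y) : Prop :=
  forall x y, le (f x) (f y) -> le x y.
Definition emb (X Y : PO) (f : X -> Y) : Prop :=
  forall x y, le (f x) (f y) <-> le x y.
Arguments quasi_emb {X Y} f.
Arguments emb {X Y} f.

Definition finite_set (T : Type) (a : T -> Prop) : Prop :=
  exists s : list T, forall x, a x -> In x s.

Definition fin_le {X : PO} (a b : X -> Prop) : Prop :=
  forall x, a x -> exists y, b y /\ le x y.

(* A functor PO -> PO (category of partial orders and quasi embeddings; morphisms
   are functions, so W(f) depends only on f extensionally), preserving embeddings,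
   with a natural transformation supp : W => [.]^{<omega} satisfying the support
   condition. *)
Unset Implicit Arguments.
Record dilator := {
  Wobj : PO -> PO;
  Wmap : forall (X Y : PO) (f : X -> Y), quasi_emb f -> Wobj X -> Wobj Y;
  Wmap_ext : forall (X Y : PO) (f g : X -> Y) (hf : quasi_emb f) (hg : quasi_emb g),
      (forall x, f x = g x) -> forall s, Wmap X Y f hf s = Wmap X Y g hg s;
  Wmap_id : forall (X : PO) (h : quasi_emb (fun x : X => x)) s, Wmap X X (fun x => x) h s = s;
  Wmap_comp : forall (X Y Z : PO) (f : X -> Y) (g : Y -> Z)
      (hf : quasi_emb f) (hg : quasi_emb g) (hgf : quasi_emb (fun x => g (f x))) s,
      Wmap X Z (fun x => g (f x)) hgf s = Wmap Y Z g hg (Wmap X Y f hf s);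
  Wmap_emb : forall (X Y : PO) (f : X -> Y) (hf : quasi_emb f),
      emb f -> emb (Wmap X Y f hf);
  supp : forall X : PO, Wobj X -> X -> Prop;
  supp_fin : forall (X : PO) (s : Wobj X), finite_set (supp X s);
  supp_nat : forall (X Y : PO) (f : X -> Y) (hf : quasi_emb f) (s : Wobj X) (y : Y),
      supp Y (Wmap X Y f hf s) y <-> exists x, supp X s x /\ f x = y;
  supp_rng : forall (X Y : PO) (f : X -> Y) (hf : quasi_emb f), emb f ->
      forall t : Wobj Y,
        (exists s, Wmap X Y f hf s = t) <-> (forall y, supp Y t y -> exists x, f x = y)
}.
Set Implicit Arguments.
Arguments Wmap d {X Y} f _ _.
Arguments supp d {X} _ _.

Definition normal (W : dilator) : Prop :=
  forall (X : PO) (s t : Wobj W X), le s t -> fin_le (supp W s) (supp W t).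

Definition restr (T : Type) (r : T -> T -> Prop) (a : T -> Prop) :
  {t | a t} -> {t | a t} -> Prop :=
  fun u v => r (proj1_sig u) (proj1_sig v).

Definition subPO (T : Type) (r : T -> T -> Prop) (a : T -> Prop)
  (H : is_po (restr r a)) : PO := mkPO H.

Definition setU (T : Type) (a b : T -> Prop) : T -> Prop := fun t => a t \/ b t.

Definition incl_l (T : Type) (a b : T -> Prop) (u : {t | a t}) : {t | setU a b t} :=
  exist _ (proj1_sig u) (or_introl (proj2_sig u)).
Definition incl_r (T : Type) (a b : T -> Prop) (u : {t | b t}) : {t | setU a b t} :=
  exist _ (proj1_sig u) (or_intror (proj2_sig u)).

Lemma incl_l_qe (T : Type) (r : T -> T -> Prop) (a b : T -> Prop)
  (Ha : is_po (restr r a)) (Hab : is_po (restr r (setU a b))) :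
  quasi_emb (X := subPO Ha) (Y := subPO Hab) (@incl_l T a b).
Proof. intros x y h; exact h. Qed.

Lemma incl_r_qe (T : Type) (r : T -> T -> Prop) (a b : T -> Prop)
  (Hb : is_po (restr r b)) (Hab : is_po (restr r (setU a b))) :
  quasi_emb (X := subPO Hb) (Y := subPO Hab) (@incl_r T a b).
Proof. intros x y h; exact h. Qed.

(* Data of a term o(a, sigma): a finite set a of terms on which the relation r
   restricts to a partial order, and sigma in W(a) with supp_a(sigma) = a. *)
Record node_data (W : dilator) (T : Type) (r : T -> T -> Prop) := {
  nd_set : T -> Prop;
  nd_fin : finite_set nd_set;
  nd_po : is_po (restr r nd_set);
  nd_el : Wobj W (subPO nd_po);
  nd_supp : forall u, supp W nd_el u
}.
Arguments nd_set {W T r} _ _.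
Arguments nd_po {W T r} _.
Arguments nd_el {W T r} _.

(* A set tw with relation twle realising the simultaneous recursive definition of
   TW(X) and <=_{TW(X)}: tw is freely generated by the constructors
   tvar (terms x-bar) and tnode (terms o(a,sigma)), and twle satisfies exactly the
   clauses (i'), (ii'), (iii'). *)
Record TW_struct (W : dilator) (X : PO) := {
  tw : Type;
  twle : tw -> tw -> Prop;
  tvar : X -> tw;
  tnode : node_data W twle -> tw;
  tvar_inj : forall x y, tvar x = tvar y -> x = y;
  tnode_inj : forall d e, tnode d = tnode e -> d = e;
  tvar_tnode : forall x d, tvar x <> tnode d;
  tw_ind : forall P : tw -> Prop,
      (forall x, P (tvar x)) ->
      (forall d, (forall t, nd_set d t -> P t) -> P (tnode d)) ->
      forall t, P t;
  twle_spec : forall s t, twle s t <->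
      ((exists x y, s = tvar x /\ t = tvar y /\ le x y) \/
       (exists e, t = tnode e /\ exists t', nd_set e t' /\ twle s t') \/
       (exists d e, s = tnode d /\ t = tnode e /\
          exists H : is_po (restr twle (setU (nd_set d) (nd_set e))),
            le (p := Wobj W (subPO H))
               (Wmap W _ (@incl_l_qe _ twle (nd_set d) (nd_set e) (nd_po d) H) (nd_el d))
               (Wmap W _ (@incl_r_qe _ twle (nd_set d) (nd_set e) (nd_po e) H) (nd_el e))))
}.

(* Reflexivity is immediate, since W(a) is a partial order. Normality of W says
   that o(a,s) <= o(b,t) forces every element of a below some element of b; by
   induction on terms the height of terms is therefore monotone along <=, so no
   term lies below one of its own subterms. This reduces antisymmetry to
   antisymmetry in W(a u b), together with the fact that o(a,s) is determined
   by the image of s in W(a u b), whose support is a. Transitivity is proved by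
   induction on height: for o(a,s) <= o(b,t) <= o(c,u) the terms of a u b u c
   are lower, so by induction they form a partial order, and as W preserves
   embeddings both comparisons can be transported into W(a u b u c) and
   composed there. *)

From Stdlib Require Import List Arith Lia ProofIrrelevance FunctionalExtensionality
  PropExtensionality Classical.

Lemma sig_eq (T : Type) (P : T -> Prop) (u v : {t | P t}) :
  proj1_sig u = proj1_sig v -> u = v.
Proof. apply eq_sig_hprop; intros; apply proof_irrelevance. Qed.

Lemma po_le_refl (P : PO) (x : P) : le x x.
Proof. apply (le_po P). Qed.

Lemma po_le_antisym (P : PO) (x y : P) : le x y -> le y x -> x = y.
Proof. apply (le_po P). Qed.

Lemma po_le_trans (P : PO) (x y z : P) : le x y -> le y z -> le x z.
Proof. apply (le_po P). Qed.

Lemma emb_quasi_emb {X Y : PO} {f : X -> Y} : emb f -> quasi_emb f.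
Proof. intros Hf x y; apply Hf. Qed.

Lemma emb_inj {X Y : PO} {f : X -> Y} : emb f -> forall x y, f x = f y -> x = y.
Proof.
  intros Hf x y E. apply po_le_antisym; apply Hf; rewrite E; apply po_le_refl.
Qed.

Lemma finite_set_uniform_bound (T : Type) (a : T -> Prop) (P : T -> nat -> Prop) :
  finite_set a ->
  (forall t n m, n <= m -> P t n -> P t m) ->
  (forall t, a t -> exists n, P t n) ->
  exists N, forall t, a t -> P t N.
Proof.
  intros [l Hl] Pmono Hbound.
  enough (exists N, forall t, In t l -> a t -> P t N) as [N HN] by eauto.
  clear Hl. induction l as [|u l [N HN]].
  - exists 0; intros t [].
  - destruct (classic (a u)) as [hu|hu].
    + destruct (Hbound u hu) as [n Hn]. exists (N + n).
      intros t [<-|Ht] ht; eapply Pmono; eauto with arith.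
    + exists N; intros t [<-|Ht] ht; [contradiction|auto].
Qed.

Section Suborders.
Variables (T : Type) (r : T -> T -> Prop).

Lemma restr_po_sub (a b : T -> Prop) :
  is_po (restr r a) -> (forall t, b t -> a t) -> is_po (restr r b).
Proof.
  intros [Hrefl [Hanti Htrans]] hba. unfold restr in *. split; [|split].
  - intros [x hx]; exact (Hrefl (exist _ x (hba _ hx))).
  - intros [x hx] [y hy] Hxy Hyx; apply sig_eq.
    exact (f_equal (@proj1_sig _ _) (Hanti (exist _ x (hba _ hx)) (exist _ y (hba _ hy)) Hxy Hyx)).
  - intros [x hx] [y hy] [z hz].
    exact (Htrans (exist _ x (hba _ hx)) (exist _ y (hba _ hy)) (exist _ z (hba _ hz))).
Qed.

Definition sub_inc {a b : T -> Prop} (h : forall t, a t -> b t) (u : {t | a t}) : {t | b t} :=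
  exist _ (proj1_sig u) (h _ (proj2_sig u)).

Lemma sub_inc_emb {a b : T -> Prop} (Ha : is_po (restr r a)) (Hb : is_po (restr r b))
  (h : forall t, a t -> b t) : emb (X := subPO Ha) (Y := subPO Hb) (sub_inc h).
Proof. intros x y; reflexivity. Qed.

End Suborders.

Arguments sub_inc {T a b} h u.
Arguments sub_inc_emb {T r a b} Ha Hb h.
Arguments restr_po_sub {T r a b}.

Lemma Wmap_comp_eq (W : dilator) (A B C : PO) (f : A -> B) (g : B -> C) (k : A -> C)
  (hf : quasi_emb f) (hg : quasi_emb g) (hk : quasi_emb k) (s : Wobj W A) :
  (forall x, g (f x) = k x) -> Wmap W g hg (Wmap W f hf s) = Wmap W k hk s.
Proof.
  intros E. assert (hgf : quasi_emb (fun x => g (f x))) by (intros x y H; apply hf, hg, H).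
  rewrite <- (Wmap_comp W A B C f g hf hg hgf s). apply Wmap_ext; exact E.
Qed.

Section TermSystem.
Variables (W : dilator) (X : PO) (TS : TW_struct W X).
Notation T := (tw TS).
Notation r := (twle TS).
Notation node := (node_data W r).

Definition nd_le (d e : node) (H : is_po (restr r (setU (nd_set d) (nd_set e)))) : Prop :=
  le (Wmap W _ (incl_l_qe (Ha := nd_po d) H) (nd_el d))
     (Wmap W _ (incl_r_qe (Hb := nd_po e) H) (nd_el e)).

Lemma tw_cases t : (exists x, t = tvar TS x) \/ (exists d, t = tnode TS d).
Proof. pattern t; apply tw_ind; eauto. Qed.

Lemma twle_var_var x y : le x y -> r (tvar TS x) (tvar TS y).
Proof. intros Hxy; apply twle_spec; left; eauto. Qed.

Lemma twle_subterm s t e : nd_set e t -> r s t -> r s (tnode TS e).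
Proof. intros Ht Hst; apply twle_spec; right; left; eauto. Qed.

Lemma twle_node_node d e H : nd_le d e H -> r (tnode TS d) (tnode TS e).
Proof. intros Hde; apply twle_spec; right; right; exists d, e; eauto. Qed.

Lemma twle_var_inv s x : r s (tvar TS x) -> exists y, s = tvar TS y /\ le y x.
Proof.
  intros H; apply twle_spec in H.
  destruct H as [[y [x' [-> [E Hle]]]] | [[e [E _]] | [d [e [_ [E _]]]]]].
  - apply tvar_inj in E; subst; eauto.
  - destruct (tvar_tnode TS _ _ E).
  - destruct (tvar_tnode TS _ _ E).
Qed.

Lemma twle_node_inv s e : r s (tnode TS e) ->
  (exists t, nd_set e t /\ r s t) \/ (exists d, s = tnode TS d /\ exists H, nd_le d e H).
Proof.
  intros H; apply twle_spec in H.
  destruct H as [[x [y [_ [E _]]]] | [[e' [E Hsub]] | [d [e' [Es [E Hle]]]]]].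
  - destruct (tvar_tnode TS _ _ (eq_sym E)).
  - apply tnode_inj in E; subst; auto.
  - apply tnode_inj in E; subst; eauto.
Qed.

Definition nd_embed (d : node) {U : T -> Prop} (HU : is_po (restr r U))
  (hd : forall t, nd_set d t -> U t) : Wobj W (subPO HU) :=
  Wmap W (X := subPO (nd_po d)) (Y := subPO HU) (sub_inc hd)
    (emb_quasi_emb (sub_inc_emb (nd_po d) HU hd)) (nd_el d).

Lemma nd_le_embed_union d e H :
  nd_le d e H <->
  le (nd_embed d H (fun t h => or_introl h)) (nd_embed e H (fun t h => or_intror h)).
Proof.
  unfold nd_le, nd_embed.
  rewrite (proof_irrelevance _ (incl_l_qe H)
             (emb_quasi_emb (sub_inc_emb (nd_po d) H (fun t h => or_introl h)))),
    (proof_irrelevance _ (incl_r_qe H)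
       (emb_quasi_emb (sub_inc_emb (nd_po e) H (fun t h => or_intror h)))).
  reflexivity.
Qed.

Lemma nd_embed_sub (d : node) {U V : T -> Prop}
  (HU : is_po (restr r U)) (HV : is_po (restr r V)) (hUV : forall t, U t -> V t) hd hd' :
  Wmap W (X := subPO HU) (Y := subPO HV) (sub_inc hUV) (emb_quasi_emb (sub_inc_emb HU HV hUV))
    (nd_embed d HU hd) =
  nd_embed d HV hd'.
Proof. apply Wmap_comp_eq; intros; apply sig_eq; reflexivity. Qed.

Lemma nd_embed_le_sub (d e : node) {U V : T -> Prop}
  (HU : is_po (restr r U)) (HV : is_po (restr r V)) (hUV : forall t, U t -> V t) hd he hd' he' :
  le (nd_embed d HU hd) (nd_embed e HU he) <-> le (nd_embed d HV hd') (nd_embed e HV he').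
Proof.
  rewrite <- (nd_embed_sub d HU HV hUV hd hd'), <- (nd_embed_sub e HU HV hUV he he').
  symmetry; apply Wmap_emb, sub_inc_emb.
Qed.

Lemma nd_le_iff_embed d e H {U : T -> Prop} (HU : is_po (restr r U)) hd he :
  nd_le d e H <-> le (nd_embed d HU hd) (nd_embed e HU he).
Proof.
  rewrite nd_le_embed_union. apply nd_embed_le_sub.
  intros t [h|h]; auto.
Qed.

Lemma supp_nd_embed d {U : T -> Prop} (HU : is_po (restr r U)) hd (u : {t | U t}) :
  supp W (nd_embed d HU hd) u <-> nd_set d (proj1_sig u).
Proof.
  unfold nd_embed; rewrite supp_nat. split.
  - intros [[t ht] [_ <-]]; exact ht.
  - intros hu; exists (exist _ (proj1_sig u) hu).
    split; [apply nd_supp | apply sig_eq; reflexivity].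
Qed.

Lemma nd_embed_inj d e {U : T -> Prop} (HU : is_po (restr r U)) hd he :
  nd_embed d HU hd = nd_embed e HU he -> d = e.
Proof.
  intros E.
  assert (Hsub : forall d' e' hd' he', nd_embed d' HU hd' = nd_embed e' HU he' ->
            forall t, nd_set d' t -> nd_set e' t).
  { intros d' e' hd' he' E' t ht.
    apply (supp_nd_embed e' HU he' (exist _ t (hd' t ht))).
    rewrite <- E'; apply supp_nd_embed; exact ht. }
  pose proof (Hsub _ _ _ _ E) as Hde. pose proof (Hsub _ _ _ _ (eq_sym E)) as Hed.
  clear Hsub.
  destruct d as [a fa pa sa Sa], e as [b fb pb sb Sb]; simpl in *.
  assert (a = b) as <- by (extensionality t; apply propositional_extensionality; split; auto).
  destruct (proof_irrelevance _ fa fb), (proof_irrelevance _ pa pb),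
    (proof_irrelevance _ hd he).
  unfold nd_embed in E; simpl in E.
  apply (emb_inj (Wmap_emb W _ _ _ _ (sub_inc_emb pa HU hd))) in E; subst sb.
  destruct (proof_irrelevance _ Sa Sb). reflexivity.
Qed.

Inductive height_le : T -> nat -> Prop :=
| height_le_var x n : height_le (tvar TS x) n
| height_le_node d n : (forall t, nd_set d t -> height_le t n) -> height_le (tnode TS d) (S n).

Lemma height_le_S t n : height_le t n -> height_le t (S n).
Proof. induction 1; constructor; auto. Qed.

Lemma height_le_weaken t n m : n <= m -> height_le t n -> height_le t m.
Proof. induction 1; auto using height_le_S. Qed.

Lemma height_le_node_0 d : ~ height_le (tnode TS d) 0.
Proof.
  intros H; inversion H as [x n E|]; destruct (tvar_tnode TS _ _ E).
Qed.

Lemma height_le_node_S d n :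
  height_le (tnode TS d) (S n) -> forall t, nd_set d t -> height_le t n.
Proof.
  intros H; inversion H as [x m E|d' m Hd E]; [destruct (tvar_tnode TS _ _ E)|].
  apply tnode_inj in E; subst; auto.
Qed.

Lemma height_le_exists t : exists n, height_le t n.
Proof.
  pattern t; apply tw_ind.
  - intros x; exists 0; constructor.
  - intros d IH.
    destruct (finite_set_uniform_bound _ _ _ (nd_fin d) height_le_weaken IH) as [N HN].
    exists (S N); constructor; exact HN.
Qed.

Definition height_leq s t := forall n, height_le t n -> height_le s n.

Lemma node_not_height_leq_subterm d t : nd_set d t -> ~ height_leq (tnode TS d) t.
Proof.
  intros ht Hleq. destruct (height_le_exists t) as [n Hn].
  induction n as [|n IHn].
  - exact (height_le_node_0 _ (Hleq 0 Hn)).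
  - exact (IHn (height_le_node_S _ _ (Hleq _ Hn) t ht)).
Qed.

Lemma twle_refl t : r t t.
Proof.
  pattern t; apply tw_ind.
  - intros x; apply twle_var_var, po_le_refl.
  - intros d _.
    assert (H : is_po (restr r (setU (nd_set d) (nd_set d))))
      by (apply (restr_po_sub (nd_po d)); intros t0 [h|h]; exact h).
    apply (twle_node_node d d H), (nd_le_iff_embed d d H (nd_po d) (fun t h => h) (fun t h => h)).
    apply po_le_refl.
Qed.

Section Normal.
Hypothesis HW : normal W.

Lemma nd_le_fin_le d e H :
  nd_le d e H -> forall t, nd_set d t -> exists t', nd_set e t' /\ r t t'.
Proof.
  intros Hde t ht.
  apply (nd_le_iff_embed d e H H (fun t h => or_introl h) (fun t h => or_intror h)), HW in Hde.
  destruct (Hde (exist _ t (or_introl ht))) as [[t' h'] [Ht' Hle]].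
  - apply supp_nd_embed; exact ht.
  - exists t'; split; [apply supp_nd_embed in Ht'; exact Ht' | exact Hle].
Qed.

Lemma twle_height_leq s t : r s t -> height_leq s t.
Proof.
  revert t; pattern s; apply tw_ind.
  - intros x t _ n _; constructor.
  - intros d IHd t; pattern t; apply tw_ind.
    + intros y H; apply twle_var_inv in H as [y' [E _]].
      destruct (tvar_tnode TS _ _ (eq_sym E)).
    + intros e IHe H [|n] Hn; [destruct (height_le_node_0 _ Hn)|].
      apply twle_node_inv in H as [[t' [Ht' Hle]] | [d' [E [H Hde]]]].
      * apply height_le_S, (IHe t' Ht' Hle), (height_le_node_S _ _ Hn _ Ht').
      * apply tnode_inj in E; subst d'. constructor; intros u hu.
        destruct (nd_le_fin_le d e H Hde u hu) as [u' [Hu' Hle]].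
        exact (IHd u hu u' Hle n (height_le_node_S _ _ Hn _ Hu')).
Qed.

Lemma not_node_twle_below_subterm e t s : nd_set e t -> r s t -> ~ r (tnode TS e) s.
Proof.
  intros Ht Hst Hes. apply (node_not_height_leq_subterm e t Ht).
  intros n Hn; apply (twle_height_leq _ _ Hes), (twle_height_leq _ _ Hst), Hn.
Qed.

Lemma twle_antisym s t : r s t -> r t s -> s = t.
Proof.
  intros Hst Hts. destruct (tw_cases t) as [[x ->] | [e ->]].
  - apply twle_var_inv in Hst as [y [-> Hyx]]. apply twle_var_inv in Hts as [x' [E Hxy]].
    apply tvar_inj in E; subst x'. f_equal; apply po_le_antisym; assumption.
  - apply twle_node_inv in Hst as [[t [Ht Hst']] | [d [-> [H Hde]]]].
    { destruct (not_node_twle_below_subterm e t s Ht Hst' Hts). }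
    apply twle_node_inv in Hts as [[t [Ht Hts']] | [e' [E [H' Hed]]]].
    { destruct (not_node_twle_below_subterm d t _ Ht Hts' (twle_node_node d e H Hde)). }
    apply tnode_inj in E; subst e'.
    f_equal; apply (nd_embed_inj d e H (fun t h => or_introl h) (fun t h => or_intror h)).
    apply po_le_antisym.
    + exact (proj1 (nd_le_iff_embed d e H H _ _) Hde).
    + exact (proj1 (nd_le_iff_embed e d H' H _ _) Hed).
Qed.

Definition twle_trans_upto n :=
  forall a b c, height_le a n -> height_le b n -> height_le c n -> r a b -> r b c -> r a c.

Lemma restr_po_height_bounded (U : T -> Prop) m :
  (forall t, U t -> height_le t m) -> twle_trans_upto m -> is_po (restr r U).
Proof.
  intros HU Htrans. unfold restr. split; [|split].
  - intros [x hx]; apply twle_refl.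
  - intros [x hx] [y hy] Hxy Hyx; apply sig_eq, twle_antisym; assumption.
  - intros [x hx] [y hy] [z hz]; apply Htrans; auto.
Qed.

Lemma nd_le_trans c d e H1 H2 H3 :
  is_po (restr r (fun t => nd_set c t \/ nd_set d t \/ nd_set e t)) ->
  nd_le c d H1 -> nd_le d e H2 -> nd_le c e H3.
Proof.
  intros HU Hcd Hde.
  assert (hc : forall t, nd_set c t -> nd_set c t \/ nd_set d t \/ nd_set e t) by tauto.
  assert (hd : forall t, nd_set d t -> nd_set c t \/ nd_set d t \/ nd_set e t) by tauto.
  assert (he : forall t, nd_set e t -> nd_set c t \/ nd_set d t \/ nd_set e t) by tauto.
  apply (proj2 (nd_le_iff_embed c e H3 HU hc he)), po_le_trans with (nd_embed d HU hd).
  - exact (proj1 (nd_le_iff_embed c d H1 HU hc hd) Hcd).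
  - exact (proj1 (nd_le_iff_embed d e H2 HU hd he) Hde).
Qed.

Lemma twle_trans_upto_all n : twle_trans_upto n.
Proof.
  induction n as [n IHn] using lt_wf_ind.
  intros a b c; revert a b; pattern c; apply tw_ind; clear c.
  - intros z a b _ _ _ Hab Hbz.
    apply twle_var_inv in Hbz as [y [-> Hyz]]. apply twle_var_inv in Hab as [x [-> Hxy]].
    apply twle_var_var, po_le_trans with y; assumption.
  - intros e IHe a b Ha Hb Hc Hab Hbc.
    destruct n as [|m]; [destruct (height_le_node_0 _ Hc)|].
    pose proof (height_le_node_S _ _ Hc) as He.
    apply twle_node_inv in Hbc as [[t [Ht Hbt]] | [d [-> [H2 Hde]]]].
    { apply (twle_subterm _ _ _ Ht).
      exact (IHe t Ht a _ Ha Hb (height_le_S _ _ (He t Ht)) Hab Hbt). }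
    pose proof (height_le_node_S _ _ Hb) as Hd.
    apply twle_node_inv in Hab as [[s [Hs Has]] | [c [-> [H1 Hcd]]]].
    { destruct (nd_le_fin_le d e H2 Hde s Hs) as [s' [Hs' Hss']].
      apply (twle_subterm _ _ _ Hs').
      apply (IHe s' Hs' a s Ha); auto using height_le_S. }
    pose proof (height_le_node_S _ _ Ha) as Hc'.
    (* all of c, d, e have height <= m, so they form a partial order by induction *)
    assert (HU : is_po (restr r (fun t => nd_set c t \/ nd_set d t \/ nd_set e t))).
    { apply (restr_po_height_bounded _ m); [intros t [h|[h|h]]; auto | apply IHn; auto]. }
    assert (H3 : is_po (restr r (setU (nd_set c) (nd_set e))))
      by (apply (restr_po_sub HU); intros t [h|h]; auto).
    apply (twle_node_node c e H3), (nd_le_trans c d e H1 H2 H3 HU Hcd Hde).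
Qed.

Lemma twle_trans a b c : r a b -> r b c -> r a c.
Proof.
  destruct (height_le_exists a) as [na Ha], (height_le_exists b) as [nb Hb],
    (height_le_exists c) as [nc Hc].
  apply (twle_trans_upto_all (na + nb + nc));
    [apply height_le_weaken with na | apply height_le_weaken with nb
    | apply height_le_weaken with nc]; auto; lia.
Qed.

End Normal.
End TermSystem.

Theorem proposition2p6 (W : dilator) (HW : normal W) (X : PO) (S : TW_struct W X) :
  is_po (twle S).
Proof.
  split; [|split].
  - apply twle_refl.
  - intros s t; apply twle_antisym; assumption.
  - intros a b c; apply twle_trans; assumption.
Qed.
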